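(* Let $\mathcal{H}\in\mathbb{R}_D^{[2,2]}$ and write its Hermitian flattening matrix as $\mathfrak{m}(\mathcal{H})=\begin{pmatrix}A&C\\C&B\end{pmatrix}$ with $A,B,C$ real symmetric $2\times 2$ matrices. Then $\operatorname{hrank}_{\mathbb{R}}(\mathcal{H})\le 5$. Moreover, if one of $A,B$ is positive definite (or negative definite), or if $A=B=0$, then $\operatorname{hrank}(\mathcal{H})=\operatorname{hrank}_{\mathbb{R}}(\mathcal{H})\le 4$.
   Context: $\mathbb{C}^{[n_1,n_2]}$ is the real vector space of tensors $\mathcal{H}\in\mathbb{C}^{n_1\times n_2\times n_1\times n_2}$ with $\mathcal{H}_{i_1i_2j_1j_2}=\overline{\mathcal{H}_{j_1j_2i_1i_2}}$. For $v_i\in\mathbb{C}^{n_i}$, $[v_1,v_2]_{\otimes h}:=v_1\otimes v_2\otimes\overline{v_1}\otimes\overline{v_2}$. The Hermitian rank $\operatorname{hrank}(\mathcal{H})$ is the smallest $r$ with $\mathcal{H}=\sum_{i=1}^r\lambda_i[u_i^1,u_i^2]_{\otimes h}$, $\lambda_i\in\mathbb{R}$, $u_i^j\in\mathbb{C}^{n_j}$. $\mathbb{R}_D^{[2,2]}$ is the set of real tensors in $\mathbb{C}^{[2,2]}$ that can be written as $\sum_i\lambda_i[u_i^1,u_i^2]_{\otimes h}$ with $\lambda_i\in\mathbb{R}$ and real vectors $u_i^j\in\mathbb{R}^2$; for such $\mathcal{H}$, $\operatorname{hrank}_{\mathbb{R}}(\mathcal{H})$ is the smallest length of such a decomposition with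 real vectors. The Hermitian flattening $\mathfrak{m}(\mathcal{H})$ is the $4\times4$ matrix with $(\mathfrak{m}(\mathcal{H}))_{(i_1,i_2),(j_1,j_2)}=\mathcal{H}_{i_1i_2j_1j_2}$, rows and columns indexed by pairs in lexicographic order $(1,1),(1,2),(2,1),(2,2)$; equivalently $\mathfrak{m}$ is linear with $\mathfrak{m}([v_1,v_2]_{\otimes h})=(v_1v_1^* )\boxtimes(v_2v_2^* )$, $\boxtimes$ the Kronecker product. Thus $A$ is the block with $i_1=j_1=1$, $B$ the block with $i_1=j_1=2$, $C$ the block with $i_1=1,j_1=2$. *)

From HB Require Import structures.
From mathcomp Require Import all_boot all_order all_algebra.
From mathcomp Require Import reals.
From mathcomp Require Import complex.
Set Implicit Arguments. Unset Strict Implicit. Unset Printing Implicit Defensive.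
Import Order.TTheory GRing.Theory Num.Theory.
Local Open Scope ring_scope.

(* Tensors in C^{2 x 2 x 2 x 2} (or R^{...}), indexed by 'I_2 (index 0 <-> paper's 1). *)
Definition tensor22 (K : Type) := 'I_2 -> 'I_2 -> 'I_2 -> 'I_2 -> K.

Definition hsimple (R : realType) (v1 v2 : 'I_2 -> R[i]) : tensor22 R[i] :=
  fun i1 i2 j1 j2 => v1 i1 * v2 i2 * conjc (v1 j1) * conjc (v2 j2).

Definition hsimpleR (R : realType) (v1 v2 : 'I_2 -> R) : tensor22 R :=
  fun i1 i2 j1 j2 => v1 i1 * v2 i2 * v1 j1 * v2 j2.

Definition hdecomp_le (R : realType) (H : tensor22 R[i]) (r : nat) : Prop :=
  exists (lam : 'I_r -> R) (u1 u2 : 'I_r -> 'I_2 -> R[i]),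
    H = fun i1 i2 j1 j2 => \sum_(k < r) real_complex R (lam k) * hsimple (u1 k) (u2 k) i1 i2 j1 j2.

Definition hdecompR_le (R : realType) (H : tensor22 R) (r : nat) : Prop :=
  exists (lam : 'I_r -> R) (u1 u2 : 'I_r -> 'I_2 -> R),
    H = fun i1 i2 j1 j2 => \sum_(k < r) lam k * hsimpleR (u1 k) (u2 k) i1 i2 j1 j2.

Definition is_hrank (R : realType) (H : tensor22 R[i]) (r : nat) : Prop :=
  hdecomp_le H r /\ forall s, hdecomp_le H s -> (r <= s)%N.

Definition is_hrankR (R : realType) (H : tensor22 R) (r : nat) : Prop :=
  hdecompR_le H r /\ forall s, hdecompR_le H s -> (r <= s)%N.

Definition in_RD (R : realType) (H : tensor22 R) : Prop := exists r, hdecompR_le H r.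

Definition tensorC (R : realType) (H : tensor22 R) : tensor22 R[i] :=
  fun i1 i2 j1 j2 => real_complex R (H i1 i2 j1 j2).

(* Hermitian flattening: rows/columns indexed lexicographically, (i1,i2) |-> 2*i1+i2. *)
Definition fst_idx (i : 'I_(2 + 2)) : 'I_2 := inord (i %/ 2).
Definition snd_idx (i : 'I_(2 + 2)) : 'I_2 := inord (i %% 2).
Definition hflat (R : realType) (H : tensor22 R) : 'M[R]_(2 + 2) :=
  \matrix_(i, j) H (fst_idx i) (snd_idx i) (fst_idx j) (snd_idx j).

Definition posdef (R : realType) (n : nat) (M : 'M[R]_n) : Prop :=
  forall x : 'cV[R]_n, x != 0 -> 0 < (x^T *m M *m x) 0 0.
Definition negdef (R : realType) (n : nat) (M : 'M[R]_n) : Prop := posdef (- M).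

From HB Require Import structures.
From mathcomp Require Import all_boot all_order all_algebra.
From mathcomp Require Import reals.
From mathcomp Require Import complex.
From mathcomp Require Import ring lra.
From Stdlib Require Import FunctionalExtensionality Classical Wf_nat.
Set Implicit Arguments.
Unset Strict Implicit.
Unset Printing Implicit Defensive.
Import Order.TTheory GRing.Theory Num.Theory.
Local Open Scope ring_scope.

(* If the block A of m(H) is definite, one congruence diagonalises A and C
   together, A = m1 a a^T + m2 b b^T and C = m1 c1 a a^T + m2 c2 b b^T, and what
   remains of B is a symmetric 2x2 matrix n1 g g^T + n2 h h^T.  Hence
   H = m1 [(1,c1), a] + m2 [(1,c2), b] + n1 [(0,1), g] + n2 [(0,1), h], and the
   four vectors (1,c1) (x) a, (1,c2) (x) b, (0,1) (x) g, (0,1) (x) h are linearly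
   independent.  For such a decomposition m(H) = X diag(lam) X^T with X of full
   column rank, so the number of nonzero lam_k is rank m(H), a lower bound for
   the length of every complex decomposition.  If A = B = 0, the first factors
   (1,1) and (1,-1) do the same job.  In general, subtracting one real term
   t [e1, w] makes A definite (after exchanging A and B if A = 0), which leaves
   five terms. *)

Lemma sym2_rank1_factor (F : fieldType) (p q s : F) : p * s = q ^+ 2 ->
  exists nu w0 w1 : F, [/\ (w0 != 0) || (w1 != 0), p = nu * w0 ^+ 2,
     q = nu * w0 * w1 & s = nu * w1 ^+ 2].
Proof.
move=> det0; have [p0|p0] := eqVneq p 0.
  have q0 : q = 0 by apply/eqP; rewrite -sqrf_eq0 -det0 p0 mul0r.
  by exists s, 0, 1; rewrite oner_neq0 orbT p0 q0; split=> //; ring.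
exists p, 1, (q / p); rewrite oner_neq0; split=> //; first ring; first by field.
by apply: (mulfI p0); rewrite det0; field.
Qed.

Lemma sym2_split2 (F : numFieldType) (p q s : F) : exists n1 n2 g0 g1 h0 h1 : F,
  [/\ g0 * h1 - g1 * h0 != 0, p = n1 * g0 ^+ 2 + n2 * h0 ^+ 2,
      q = n1 * g0 * g1 + n2 * h0 * h1 & s = n1 * g1 ^+ 2 + n2 * h1 ^+ 2].
Proof.
have [p0|p0] := eqVneq p 0; last first.
  exists p, (s - q ^+ 2 / p), 1, (q / p), 0, 1.
  by rewrite mul1r mulr0 subr0 oner_neq0; split=> //; field.
have [s0|s0] := eqVneq s 0; last first.
  exists s, (- (q ^+ 2 / s)), (q / s), 1, 1, 0.
  by rewrite mulr0 mul1r sub0r oppr_eq0 oner_neq0 p0; split=> //; field.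
(* 2 q x y = q/2 (x + y)^2 - q/2 (x - y)^2 *)
exists (q / 2), (- (q / 2)), 1, 1, 1, (-1); rewrite p0 s0.
split; [|by field..].
by rewrite (_ : 1 * -1 - 1 * 1 = - 2) ?oppr_eq0 ?pnatr_eq0 //; ring.
Qed.

Lemma sym2_simultaneous_diag (R : rcfType) (p q s x y z : R) :
  0 < p * s - q ^+ 2 ->
  exists m1 m2 c1 c2 a0 a1 b0 b1 : R, [/\ a0 * b1 - a1 * b0 != 0,
   [/\ p = m1 * a0 ^+ 2 + m2 * b0 ^+ 2, q = m1 * a0 * a1 + m2 * b0 * b1
     & s = m1 * a1 ^+ 2 + m2 * b1 ^+ 2] &
   [/\ x = m1 * c1 * a0 ^+ 2 + m2 * c2 * b0 ^+ 2,
       y = m1 * c1 * a0 * a1 + m2 * c2 * b0 * b1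
     & z = m1 * c1 * a1 ^+ 2 + m2 * c2 * b1 ^+ 2]].
Proof.
set d := p * s - q ^+ 2 => d_gt0.
have d0 : d != 0 by rewrite gt_eqF.
have p0 : p != 0.
  by apply: contraTneq d_gt0 => p0; rewrite /d p0 mul0r sub0r oppr_gt0 -leNgt sqr_ge0.
(* c1 is a root of det([x y; y z] - c [p q; q s]), a real one since d > 0 *)
pose D := (x * s + z * p - 2 * y * q) ^+ 2 - 4 * d * (x * z - y ^+ 2).
have D_ge0 : 0 <= D.
  have -> : D = (2 * d * (x / p) - (x * s + z * p - 2 * y * q)) ^+ 2
      + 4 * d * (y - x / p * q) ^+ 2 by rewrite /D /d; field.
  by rewrite addr_ge0 ?sqr_ge0 // mulr_ge0 ?sqr_ge0 // mulr_ge0 // ltW.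
pose c1 := ((x * s + z * p - 2 * y * q) + Num.sqrt D) / (2 * d).
have [nu [w0 [w1 [w0w1 Ex Ey Ez]]]] :
    exists nu w0 w1, [/\ (w0 != 0) || (w1 != 0), x - c1 * p = nu * w0 ^+ 2,
      y - c1 * q = nu * w0 * w1 & z - c1 * s = nu * w1 ^+ 2].
  apply: sym2_rank1_factor; apply/eqP; rewrite -subr_eq0.
  have -> : (x - c1 * p) * (z - c1 * s) - (y - c1 * q) ^+ 2 =
      (Num.sqrt D ^+ 2 - D) / (4 * d) by rewrite /c1 /D /d; field.
  by rewrite sqr_sqrtr // subrr mul0r.
(* t makes [p q; q s] - t w w^T singular *)
pose den := s * w0 ^+ 2 - 2 * q * w0 * w1 + p * w1 ^+ 2.
have den0 : den != 0.
  have pden : p * den = (p * w1 - q * w0) ^+ 2 + d * w0 ^+ 2 by rewrite /den /d; ring.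
  suff : 0 < p * den by apply: contraTneq => ->; rewrite mulr0 ltxx.
  rewrite pden; have [w00|w00] := eqVneq w0 0.
    move: w0w1; rewrite w00 eqxx /= => w10.
    by rewrite expr0n mulr0 mulr0 subr0 addr0 exprn_even_gt0 //= mulf_neq0.
  by rewrite ltr_wpDl ?sqr_ge0 // mulr_gt0 // exprn_even_gt0 //= w00.
pose t := d / den.
have [m1 [a0 [a1 [_ Ep Eq Es]]]] :
    exists m1 a0 a1, [/\ (a0 != 0) || (a1 != 0), p - t * w0 ^+ 2 = m1 * a0 ^+ 2,
      q - t * w0 * w1 = m1 * a0 * a1 & s - t * w1 ^+ 2 = m1 * a1 ^+ 2].
  by apply: sym2_rank1_factor; rewrite /t /den /d; field; rewrite -/den.
have [Ep' Eq' Es'] : [/\ p = m1 * a0 ^+ 2 + t * w0 ^+ 2, q = m1 * a0 * a1 + t * w0 * w1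
    & s = m1 * a1 ^+ 2 + t * w1 ^+ 2].
  by split; [rewrite -Ep | rewrite -Eq | rewrite -Es]; ring.
have d_factor : d = m1 * t * (a0 * w1 - a1 * w0) ^+ 2 by rewrite /d Ep' Eq' Es'; ring.
have aw0 : a0 * w1 - a1 * w0 != 0.
  by apply: contraNneq d0 => e; rewrite d_factor e expr0n mulr0.
have t0 : t != 0 by apply: contraNneq d0 => e; rewrite d_factor e mulr0 mul0r.
have [-> -> ->] : [/\ x = c1 * p + nu * w0 ^+ 2, y = c1 * q + nu * w0 * w1
    & z = c1 * s + nu * w1 ^+ 2].
  by split; [rewrite -Ex | rewrite -Ey | rewrite -Ez]; ring.
exists m1, t, c1, (c1 + nu / t), a0, a1, w0, w1.
by rewrite Ep' Eq' Es'; split=> //; split; field.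
Qed.

Lemma sym2_shift_det_gt0 (R : realFieldType) (p q s : R) :
  ~ [/\ p = 0, q = 0 & s = 0] ->
  exists t w0 w1 : R, 0 < (p - t * w0 ^+ 2) * (s - t * w1 ^+ 2) - (q - t * w0 * w1) ^+ 2.
Proof.
move=> pqs_neq0; have [s0|s0] := eqVneq s 0; last first.
  exists (p - (q ^+ 2 + 1) / s), 1, 0.
  by rewrite (_ : _ - _ = 1) ?ltr01 //; field.
have [p0|p0] := eqVneq p 0; last first.
  exists (- ((q ^+ 2 + 1) / p)), 0, 1.
  by rewrite (_ : _ - _ = 1) ?ltr01 // s0; field.
have q0 : q != 0 by apply/eqP => q0; apply: pqs_neq0.
exists q, 1, 1; rewrite p0 s0 (_ : _ - _ = q ^+ 2) ?exprn_even_gt0 //=; ring.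
Qed.

Lemma cramer2_eq0 (F : fieldType) (u v a0 a1 b0 b1 : F) :
  a0 * b1 - a1 * b0 != 0 -> u * a0 + v * b0 = 0 -> u * a1 + v * b1 = 0 ->
  u = 0 /\ v = 0.
Proof.
move=> det0 e0 e1.
have eu : u * (a0 * b1 - a1 * b0) = b1 * (u * a0 + v * b0) - b0 * (u * a1 + v * b1) by ring.
have ev : v * (a0 * b1 - a1 * b0) = a0 * (u * a1 + v * b1) - a1 * (u * a0 + v * b0) by ring.
rewrite e0 e1 !mulr0 subrr in eu ev.
by split; apply: (mulIf det0); rewrite mul0r.
Qed.

Lemma rank_diag_mx (F : fieldType) n (d : 'rV[F]_n) :
  \rank (diag_mx d) = (\sum_(k < n) (d ord0 k != 0%R))%N.
Proof.
elim: n d => [|n IH] d; first by rewrite big_ord0 thinmx0 mxrank0.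
pose l := lsubmx (d : 'rV_(1 + n)); pose r := rsubmx (d : 'rV_(1 + n)).
have -> : \rank (diag_mx d) = \rank (block_mx (diag_mx l) 0 0 (diag_mx r)).
  by rewrite -diag_mx_row hsubmxK.
rewrite rank_diag_block_mx IH rank_rV big_ord_recl; congr (_ + _)%N.
  rewrite [diag_mx _]mx11_scalar !mxE eqxx mulr1n (_ : lshift n 0 = 0); last exact: val_inj.
  by congr negb; apply/eqP/eqP => [/matrixP/(_ 0 0)|->]; rewrite ?mxE ?eqxx ?mulr1n ?raddf0.
apply: eq_bigr => k _; rewrite /r mxE (_ : rshift 1 k = lift ord0 k) //; exact: val_inj.
Qed.

Lemma mxrank_sum_rank1 (F : fieldType) m p n (M : 'I_n -> 'M[F]_(m, p)) :
  (forall k, \rank (M k) <= 1)%N -> (\rank (\sum_(k < n) M k)%R <= n)%N.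
Proof.
elim: n M => [|n IH] M rkM; first by rewrite big_ord0 mxrank0.
rewrite big_ord_recr /=; apply: leq_trans (mxrank_add _ _) _.
by rewrite -[X in (_ <= X)%N]addn1 leq_add ?IH.
Qed.

Lemma ex_least_nat (P : nat -> Prop) n :
  P n -> exists r, P r /\ forall s, P s -> (r <= s)%N.
Proof.
move=> Pn; have := dec_inh_nat_subset_has_unique_least_element P (fun n => classic (P n)).
case=> [|r [[Pr r_min] _]]; first by exists n.
by exists r; split=> // s /r_min /ssrnat.leP.
Qed.

Definition o0 : 'I_2 := @Ordinal 2 0 isT.
Definition o1 : 'I_2 := @Ordinal 2 1 isT.
Definition k0 : 'I_4 := @Ordinal 4 0 isT.
Definition k1 : 'I_4 := @Ordinal 4 1 isT.
Definition k2 : 'I_4 := @Ordinal 4 2 isT.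
Definition k3 : 'I_4 := @Ordinal 4 3 isT.

Lemma ord2P (i : 'I_2) : i = o0 \/ i = o1.
Proof. by case: i => [[|[|?]] Hi] //; [left|right]; apply: val_inj. Qed.

Lemma ord4P (i : 'I_4) : [\/ i = k0, i = k1, i = k2 | i = k3].
Proof.
case: i => [[|[|[|[|?]]]] Hi] //;
  [apply: Or41|apply: Or42|apply: Or43|apply: Or44]; exact: val_inj.
Qed.

Lemma big_ord2 (V : zmodType) (F : 'I_2 -> V) : \sum_(k < 2) F k = F o0 + F o1.
Proof. by rewrite !big_ord_recl big_ord0 addr0; congr (F _ + F _); apply: val_inj. Qed.

Lemma big_ord4 (V : zmodType) (F : 'I_4 -> V) :
  \sum_(k < 4) F k = F k0 + F k1 + F k2 + F k3.
Proof.
rewrite !big_ord_recl big_ord0 addr0 !addrA.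
by congr (F _ + F _ + F _ + F _); apply: val_inj.
Qed.

Definition vec2 (T : Type) (u v : T) : 'I_2 -> T := fun i => if val i == 0%N then u else v.

Definition partial_symmetric (K : Type) (H : tensor22 K) :=
  (forall i1 i2 j1 j2, H i1 i2 j1 j2 = H j1 i2 i1 j2) /\
  (forall i1 i2 j1 j2, H i1 i2 j1 j2 = H i1 j2 j1 i2).

Lemma tensor_ext (K : Type) (H G : tensor22 K) :
  (forall i1 i2 j1 j2, H i1 i2 j1 j2 = G i1 i2 j1 j2) -> H = G.
Proof.
move=> e; do 4![apply: functional_extensionality => ?]; exact: e.
Qed.

Lemma partial_symmetric_eq (K : Type) (H G : tensor22 K) :
  partial_symmetric H -> partial_symmetric G ->
  (forall i1 i2 j1 j2 : 'I_2, (i1 <= j1)%N -> (i2 <= j2)%N ->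
     H i1 i2 j1 j2 = G i1 i2 j1 j2) ->
  H = G.
Proof.
move=> [H1 H2] [G1 G2] e; apply: tensor_ext => i1 i2 j1 j2.
wlog le1 : i1 j1 / (i1 <= j1)%N.
  move=> W; case: (leqP i1 j1) => l; first exact: W.
  by rewrite H1 [G _ _ _ _]G1 W // ltnW.
wlog le2 : i2 j2 / (i2 <= j2)%N.
  move=> W; case: (leqP i2 j2) => l; first exact: W.
  by rewrite H2 [G _ _ _ _]G2 W // ltnW.
exact: e.
Qed.

Definition swap1 (K : Type) (H : tensor22 K) : tensor22 K :=
  fun i1 i2 j1 j2 => H (rev_ord i1) i2 (rev_ord j1) j2.

Lemma swap1K (K : Type) : involutive (@swap1 K).
Proof. by move=> H; apply: tensor_ext => *; rewrite /swap1 !rev_ordK. Qed.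

Lemma partial_symmetric_swap1 (K : Type) (H : tensor22 K) :
  partial_symmetric H -> partial_symmetric (swap1 H).
Proof. by case=> H1 H2; split=> *; [rewrite /swap1 H1 | rewrite /swap1 H2]. Qed.

Lemma swap1_o0 (K : Type) (H : tensor22 K) i j : swap1 H o0 i o0 j = H o1 i o1 j.
Proof. by rewrite /swap1 (_ : rev_ord o0 = o1) //; apply: val_inj. Qed.

Section RealHermitianTensors.

Variable R : realType.
Implicit Types (H : tensor22 R) (r : nat).

Definition hsumR r (lam : 'I_r -> R) (u1 u2 : 'I_r -> 'I_2 -> R) : tensor22 R :=
  fun i1 i2 j1 j2 => \sum_(k < r) lam k * hsimpleR (u1 k) (u2 k) i1 i2 j1 j2.

Definition free_products r (a f : 'I_r -> 'I_2 -> R) :=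
  forall v : 'I_r -> R, (forall i1 i2, \sum_(k < r) v k * (a k i1 * f k i2) = 0) ->
  forall k, v k = 0.

Definition free_hdecompR H r := exists (lam : 'I_r -> R) (a f : 'I_r -> 'I_2 -> R),
  H = hsumR lam a f /\ free_products a f.

Lemma partial_symmetric_hsumR r (lam : 'I_r -> R) (u1 u2 : 'I_r -> 'I_2 -> R) :
  partial_symmetric (hsumR lam u1 u2).
Proof. by split=> *; apply: eq_bigr => k _; rewrite /hsimpleR; ring. Qed.

Lemma partial_symmetric_RD H : in_RD H -> partial_symmetric H.
Proof. by case=> r [lam [u1 [u2 ->]]]; apply: partial_symmetric_hsumR. Qed.

Lemma hdecompR_of_free H r : free_hdecompR H r -> hdecompR_le H r.
Proof. by case=> lam [a [f [-> _]]]; exists lam, a, f. Qed.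

Lemma hdecompR_sub_hsimpleR H n t (u v : 'I_2 -> R) :
  hdecompR_le (fun i1 i2 j1 j2 => H i1 i2 j1 j2 - t * hsimpleR u v i1 i2 j1 j2) n ->
  hdecompR_le H n.+1.
Proof.
case=> lam [a [f e]].
exists (fun k => oapp lam t (unlift ord_max k)).
exists (fun k => oapp a u (unlift ord_max k)).
exists (fun k => oapp f v (unlift ord_max k)).
apply: tensor_ext => i1 i2 j1 j2; rewrite big_ord_recr /= unlift_none /=.
have lift_max (i : 'I_n) : widen_ord (leqnSn n) i = lift ord_max i.
  by apply: val_inj; rewrite /= /bump leqNgt ltn_ord.
under eq_bigr do rewrite lift_max liftK /=.
have /= <- := congr1 (fun G : tensor22 R => G i1 i2 j1 j2) e.
by rewrite subrK.
Qed.

Lemma hdecompR_leS H n : hdecompR_le H n -> hdecompR_le H n.+1.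
Proof.
move=> dH; apply: (@hdecompR_sub_hsimpleR _ _ 0 (vec2 0 0) (vec2 0 0)).
by congr (hdecompR_le _ n): dH; apply: tensor_ext => *; rewrite mul0r subr0.
Qed.

Lemma hdecompR_swap1 H r : hdecompR_le (swap1 H) r -> hdecompR_le H r.
Proof.
by case=> lam [a [f e]]; exists lam, (fun k i => a k (rev_ord i)), f; rewrite -[H]swap1K e.
Qed.

Lemma free_hdecompR_swap1 H r : free_hdecompR (swap1 H) r -> free_hdecompR H r.
Proof.
case=> lam [a [f [e free_af]]]; exists lam, (fun k i => a k (rev_ord i)), f.
split; first by rewrite -[H]swap1K e.
by move=> v v_rel; apply: free_af => i1 i2; rewrite -[i1]rev_ordK v_rel.
Qed.

Lemma free_hdecompR_of_detA H : partial_symmetric H ->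
  0 < H o0 o0 o0 o0 * H o0 o1 o0 o1 - H o0 o0 o0 o1 ^+ 2 -> free_hdecompR H 4.
Proof.
move=> symH detA.
have [m1 [m2 [c1 [c2 [a0 [a1 [b0 [b1 [ab [Ep Eq Es] [Ex Ey Ez]]]]]]]]]] :=
  sym2_simultaneous_diag (H o0 o0 o1 o0) (H o0 o0 o1 o1) (H o0 o1 o1 o1) detA.
have [n1 [n2 [g0 [g1 [h0 [h1 [gh Sp Sq Ss]]]]]]] := sym2_split2
  (H o1 o0 o1 o0 - m1 * c1 ^+ 2 * a0 ^+ 2 - m2 * c2 ^+ 2 * b0 ^+ 2)
  (H o1 o0 o1 o1 - m1 * c1 ^+ 2 * a0 * a1 - m2 * c2 ^+ 2 * b0 * b1)
  (H o1 o1 o1 o1 - m1 * c1 ^+ 2 * a1 ^+ 2 - m2 * c2 ^+ 2 * b1 ^+ 2).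
move/(canRL (subrK _))/(canRL (subrK _)): Sp => Bp.
move/(canRL (subrK _))/(canRL (subrK _)): Sq => Bq.
move/(canRL (subrK _))/(canRL (subrK _)): Ss => Bs.
exists (fun k : 'I_4 => nth 0 [:: m1; m2; n1; n2] k).
exists (fun k : 'I_4 => nth (vec2 0 0) [:: vec2 1 c1; vec2 1 c2; vec2 0 1; vec2 0 1] k).
exists (fun k : 'I_4 => nth (vec2 0 0) [:: vec2 a0 a1; vec2 b0 b1; vec2 g0 g1; vec2 h0 h1] k).
split.
  apply: partial_symmetric_eq => //; first exact: partial_symmetric_hsumR.
  move=> i1 i2 j1 j2; case: (ord2P i1) => ->; case: (ord2P i2) => ->;
    case: (ord2P j1) => ->; case: (ord2P j2) => -> //= _ _;
    rewrite /hsumR big_ord4 /= /hsimpleR /vec2 /= ?Ep ?Eq ?Es ?Ex ?Ey ?Ez ?Bp ?Bq ?Bs; ring.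
move=> v v_rel.
have := v_rel o0 o0; have := v_rel o0 o1; have := v_rel o1 o0; have := v_rel o1 o1.
rewrite !big_ord4 /= /vec2 /= => e11 e10 e01 e00.
have [v0 v1] : v k0 = 0 /\ v k1 = 0.
  by apply: (cramer2_eq0 ab); [rewrite -e00 | rewrite -e01]; ring.
rewrite v0 v1 in e10 e11.
have [v2 v3] : v k2 = 0 /\ v k3 = 0.
  by apply: (cramer2_eq0 gh); [rewrite -e10 | rewrite -e11]; ring.
by move=> k; case: (ord4P k) => ->.
Qed.

Lemma free_hdecompR_of_A0_B0 H : partial_symmetric H ->
  (forall i j, H o0 i o0 j = 0) -> (forall i j, H o1 i o1 j = 0) -> free_hdecompR H 4.
Proof.
move=> symH A0 B0.
have [n1 [n2 [g0 [g1 [h0 [h1 [gh Ex Ey Ez]]]]]]] :=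
  sym2_split2 (H o0 o0 o1 o0) (H o0 o0 o1 o1) (H o0 o1 o1 o1).
(* (1,1)(1,1)^T - (1,-1)(1,-1)^T has zero diagonal blocks *)
exists (fun k : 'I_4 => nth 0 [:: n1 / 2; n2 / 2; - (n1 / 2); - (n2 / 2)] k).
exists (fun k : 'I_4 => nth (vec2 0 0) [:: vec2 1 1; vec2 1 1; vec2 1 (-1); vec2 1 (-1)] k).
exists (fun k : 'I_4 => nth (vec2 0 0) [:: vec2 g0 g1; vec2 h0 h1; vec2 g0 g1; vec2 h0 h1] k).
split.
  apply: partial_symmetric_eq => //; first exact: partial_symmetric_hsumR.
  move=> i1 i2 j1 j2; case: (ord2P i1) => ->; case: (ord2P i2) => ->;
    case: (ord2P j1) => ->; case: (ord2P j2) => -> //= _ _;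
    rewrite /hsumR big_ord4 /= /hsimpleR /vec2 /= ?A0 ?B0 ?Ex ?Ey ?Ez; by field.
move=> v v_rel.
have := v_rel o0 o0; have := v_rel o0 o1; have := v_rel o1 o0; have := v_rel o1 o1.
rewrite !big_ord4 /= /vec2 /= => e11 e10 e01 e00.
have [u0 u1] : v k0 + v k2 = 0 /\ v k1 + v k3 = 0.
  by apply: (cramer2_eq0 gh); [rewrite -e00 | rewrite -e01]; ring.
have [w0 w1] : v k0 - v k2 = 0 /\ v k1 - v k3 = 0.
  by apply: (cramer2_eq0 gh); [rewrite -e10 | rewrite -e11]; ring.
by move=> k; case: (ord4P k) => ->; lra.
Qed.

Definition flat_idx (i1 i2 : 'I_2) : 'I_(2 + 2) := inord (2 * i1 + i2).

Lemma flat_idxK i1 i2 : fst_idx (flat_idx i1 i2) = i1 /\ snd_idx (flat_idx i1 i2) = i2.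
Proof.
by split; apply: val_inj; case: (ord2P i1) => ->; case: (ord2P i2) => ->;
  rewrite /fst_idx /snd_idx /flat_idx /= !inordK.
Qed.

Lemma hflat_ul H i j : ulsubmx (hflat H) i j = H o0 i o0 j.
Proof.
have idx_l (k : 'I_2) : fst_idx (lshift 2 k) = o0 /\ snd_idx (lshift 2 k) = k.
  by case: (ord2P k) => ->; split; apply: val_inj; rewrite /fst_idx /snd_idx /= inordK.
by rewrite !mxE; case: (idx_l i) => -> ->; case: (idx_l j) => -> ->.
Qed.

Lemma hflat_dr H i j : drsubmx (hflat H) i j = H o1 i o1 j.
Proof.
have idx_r (k : 'I_2) : fst_idx (rshift 2 k) = o1 /\ snd_idx (rshift 2 k) = k.
  by case: (ord2P k) => ->; split; apply: val_inj; rewrite /fst_idx /snd_idx /= inordK.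
by rewrite !mxE; case: (idx_r i) => -> ->; case: (idx_r j) => -> ->.
Qed.

Definition prodmx r (a f : 'I_r -> 'I_2 -> R) : 'M[R]_(2 + 2, r) :=
  \matrix_(i, k) (a k (fst_idx i) * f k (snd_idx i)).

Lemma hflat_hsumR r (lam : 'I_r -> R) (a f : 'I_r -> 'I_2 -> R) :
  hflat (hsumR lam a f) = prodmx a f *m diag_mx (\row_k lam k) *m (prodmx a f)^T.
Proof.
apply/matrixP => i j; rewrite mul_mx_diag !mxE; apply: eq_bigr => k _.
by rewrite !mxE /hsimpleR; ring.
Qed.

Lemma row_free_prodmx r (a f : 'I_r -> 'I_2 -> R) :
  free_products a f -> row_free (prodmx a f)^T.
Proof.
move=> free_af; apply: inj_row_free => v v0; apply/rowP => k.
rewrite mxE (free_af (fun k => v 0 k)) // => i1 i2.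
have [e1 e2] := flat_idxK i1 i2.
transitivity ((v *m (prodmx a f)^T) 0 (flat_idx i1 i2)); last by rewrite v0 mxE.
by rewrite mxE; apply: eq_bigr => l _; rewrite !mxE e1 e2.
Qed.

Lemma rank_hflat_free r (lam : 'I_r -> R) (a f : 'I_r -> 'I_2 -> R) :
  free_products a f ->
  \rank (hflat (hsumR lam a f)) = (\sum_(k < r) (lam k != 0%R))%N.
Proof.
move=> free_af; have Xfree := row_free_prodmx free_af.
rewrite hflat_hsumR mxrankMfree // -mxrank_tr trmx_mul mxrankMfree //.
by rewrite mxrank_tr rank_diag_mx; apply: eq_bigr => k _; rewrite mxE.
Qed.

Lemma hdecompR_hsumR_nonzero r (lam : 'I_r -> R) (a f : 'I_r -> 'I_2 -> R) :
  hdecompR_le (hsumR lam a f) (\sum_(k < r) (lam k != 0%R))%N.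
Proof.
set P := [pred k | lam k != 0].
rewrite (_ : (\sum_(k < r) _)%N = #|P|); last first.
  by rewrite -sum1_card [RHS]big_mkcond; apply: eq_bigr => k _; rewrite inE; case: (lam k != 0).
exists (fun j => lam (enum_val j)), (fun j => a (enum_val j)), (fun j => f (enum_val j)).
apply: tensor_ext => i1 i2 j1 j2.
rewrite -(big_enum_val (A := P) (fun k => lam k * hsimpleR (a k) (f k) i1 i2 j1 j2)).
rewrite [RHS]big_mkcond; apply: eq_bigr => k _; rewrite inE.
by case: eqP => [->|]; rewrite ?mul0r.
Qed.

Lemma hdecomp_of_hdecompR H r : hdecompR_le H r -> hdecomp_le (tensorC H) r.
Proof.
case=> lam [u1 [u2 ->]].
exists lam, (fun k i => real_complex R (u1 k i)), (fun k i => real_complex R (u2 k i)).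
apply: tensor_ext => i1 i2 j1 j2; rewrite /tensorC rmorph_sum; apply: eq_bigr => k _.
by rewrite /hsimple /hsimpleR !conjc_real !rmorphM.
Qed.

Lemma rank_hflat_le_hdecomp H s : hdecomp_le (tensorC H) s -> (\rank (hflat H) <= s)%N.
Proof.
case=> lam [u1 [u2 e]]; rewrite -(mxrank_map (real_complex R)).
have -> : map_mx (real_complex R) (hflat H) = \sum_(k < s)
   (real_complex R (lam k) *: ((\col_i (u1 k (fst_idx i) * u2 k (snd_idx i))) *m
     (\row_j (conjc (u1 k (fst_idx j)) * conjc (u2 k (snd_idx j)))))).
  apply/matrixP => i j; rewrite summxE !mxE.
  have := congr1 (fun G => G (fst_idx i) (snd_idx i) (fst_idx j) (snd_idx j)) e.
  rewrite /tensorC => ->.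
  by apply: eq_bigr => k _; rewrite !mxE big_ord1 !mxE /hsimple !mulrA.
apply: mxrank_sum_rank1 => k; apply: leq_trans (mxrank_scale _ _) _.
exact: leq_trans (mxrankM_maxl _ _) (rank_leq_col _).
Qed.

Lemma hrank_of_free_hdecompR H r : free_hdecompR H r ->
  is_hrank (tensorC H) (\rank (hflat H)) /\ is_hrankR H (\rank (hflat H)).
Proof.
case=> lam [a [f [-> free_af]]].
have dR := hdecompR_hsumR_nonzero lam a f; rewrite -(rank_hflat_free lam free_af) in dR.
split; split; [exact: hdecomp_of_hdecompR | | by [] |].
- exact: rank_hflat_le_hdecomp.
- by move=> s /hdecomp_of_hdecompR; apply: rank_hflat_le_hdecomp.
Qed.

Lemma partial_symmetric_block_eq0 H x : partial_symmetric H ->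
  H x o0 x o0 = 0 -> H x o0 x o1 = 0 -> H x o1 x o1 = 0 -> forall i j, H x i x j = 0.
Proof.
move=> [_ H2] e00 e01 e11 i j.
by case: (ord2P i) => ->; case: (ord2P j) => ->; rewrite // H2.
Qed.

Lemma hdecompR5_of_A_neq0 H : partial_symmetric H ->
  ~ (forall i j, H o0 i o0 j = 0) -> hdecompR_le H 5.
Proof.
move=> symH A_neq0; have [H1 H2] := symH.
have [|t [w0 [w1 det_gt0]]] :=
  @sym2_shift_det_gt0 _ (H o0 o0 o0 o0) (H o0 o0 o0 o1) (H o0 o1 o0 o1).
  by case=> *; apply: A_neq0; apply: partial_symmetric_block_eq0.
apply: (@hdecompR_sub_hsimpleR _ _ t (vec2 1 0) (vec2 w0 w1)).
apply/hdecompR_of_free/free_hdecompR_of_detA.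
  by split=> *; rewrite /hsimpleR; [rewrite H1 | rewrite H2]; ring.
by rewrite /hsimpleR /vec2 /=; congr (0 < _): det_gt0; ring.
Qed.

Lemma hdecompR5 H : partial_symmetric H -> hdecompR_le H 5.
Proof.
move=> symH; have [A0|] := classic (forall i j, H o0 i o0 j = 0); last first.
  exact: hdecompR5_of_A_neq0.
have [B0|B_neq0] := classic (forall i j, H o1 i o1 j = 0).
  exact/hdecompR_leS/hdecompR_of_free/free_hdecompR_of_A0_B0.
apply/hdecompR_swap1/hdecompR5_of_A_neq0; first exact: partial_symmetric_swap1.
by move=> B0; apply: B_neq0 => i j; rewrite -swap1_o0.
Qed.

Lemma posdef2_det_gt0 (M : 'M[R]_2) : posdef M ->
  M o0 o1 = M o1 o0 -> 0 < M o0 o0 * M o1 o1 - M o0 o1 ^+ 2.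
Proof.
move=> M_pos M_sym.
have qform u v : u != 0 \/ v != 0 ->
    0 < u * (u * M o0 o0 + v * M o0 o1) + v * (u * M o0 o1 + v * M o1 o1).
  move=> uv; have /M_pos : \col_i vec2 u v i != 0.
    apply/eqP => /colP uv0; case: uv => /eqP; apply.
      by have := uv0 o0; rewrite !mxE.
    by have := uv0 o1; rewrite !mxE.
  rewrite !mxE !big_ord2 !mxE !big_ord2 !mxE /vec2 /= -M_sym.
  by congr (0 < _); ring.
have M00_gt0 : 0 < M o0 o0.
  by have := qform 1 0 (or_introl (oner_neq0 _)); congr (0 < _); ring.
have := qform (- M o0 o1) (M o0 o0) (or_intror (lt0r_neq0 M00_gt0)).
rewrite (_ : _ + _ = M o0 o0 * (M o0 o0 * M o1 o1 - M o0 o1 ^+ 2)); last by ring.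
by rewrite pmulr_rgt0.
Qed.

Lemma definite2_det_gt0 (M : 'M[R]_2) : posdef M \/ negdef M ->
  M o0 o1 = M o1 o0 -> 0 < M o0 o0 * M o1 o1 - M o0 o1 ^+ 2.
Proof.
move=> [|M_neg] M_sym; first exact: posdef2_det_gt0.
have := posdef2_det_gt0 M_neg; rewrite !mxE M_sym => /(_ erefl).
by congr (0 < _); ring.
Qed.

Lemma drsubmx_hflat_swap1 H : drsubmx (hflat H) = ulsubmx (hflat (swap1 H)).
Proof. by apply/matrixP => i j; rewrite hflat_ul hflat_dr swap1_o0. Qed.

Lemma free_hdecompR_of_definiteA H : partial_symmetric H ->
  posdef (ulsubmx (hflat H)) \/ negdef (ulsubmx (hflat H)) -> free_hdecompR H 4.
Proof.
move=> symH /definite2_det_gt0; rewrite !hflat_ul => det_gt0.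
by apply: free_hdecompR_of_detA => //; apply: det_gt0; apply: symH.2.
Qed.

Lemma free_hdecompR_of_definite H : partial_symmetric H ->
  let A := ulsubmx (hflat H) in let B := drsubmx (hflat H) in
  posdef A \/ negdef A \/ posdef B \/ negdef B \/ (A = 0 /\ B = 0) ->
  free_hdecompR H 4.
Proof.
move=> symH A B.
have A_def := free_hdecompR_of_definiteA symH.
have B_def : posdef B \/ negdef B -> free_hdecompR H 4.
  rewrite /B drsubmx_hflat_swap1 => /(free_hdecompR_of_definiteA (partial_symmetric_swap1 symH)).
  exact: free_hdecompR_swap1.
case=> [?|[?|[?|[?|[A0 B0]]]]]; [apply: A_def | apply: A_def | apply: B_def | apply: B_def |]; auto.
apply: free_hdecompR_of_A0_B0 => // i j.
  by rewrite -hflat_ul -/A A0 mxE.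
by rewrite -hflat_dr -/B B0 mxE.
Qed.

End RealHermitianTensors.

Theorem theorem4p3 (R : realType) (H : tensor22 R) :
  in_RD H ->
  let A := ulsubmx (hflat H) in
  let B := drsubmx (hflat H) in
  (exists r, is_hrankR H r /\ (r <= 5)%N) /\
  ((posdef A \/ negdef A \/ posdef B \/ negdef B \/ (A = 0 /\ B = 0)) ->
   exists r, is_hrank (tensorC H) r /\ is_hrankR H r /\ (r <= 4)%N).
Proof.
move=> RD_H A B; have symH := partial_symmetric_RD RD_H.
split.
  have [r [dr r_min]] := ex_least_nat (hdecompR5 symH).
  by exists r; split; [split | apply: r_min; exact: hdecompR5].
move=> /(free_hdecompR_of_definite symH) /hrank_of_free_hdecompR [hr hrR].
by exists (\rank (hflat H)); split; [|split; [|exact: rank_leq_row]].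
Qed.
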